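(* For every odd $n\ge 1$, the permutation $\zeta_n$, which has length $(n^2+1)/2$, contains a subsequence order-isomorphic to every permutation of length $n$.
   Context: The word $z_n$ is the concatenation of $n$ runs $r_1\cdots r_n$, where for odd $k$, $r_k$ lists the odd integers in $[n]$ increasingly and for even $k$, $r_k$ lists the even integers in $[n]$ decreasingly. The permutation $\zeta_n$ of length $|z_n|$ is the unique permutation such that for $i\ne j$: $\zeta_n(i)>\zeta_n(j)$ iff either $z_n(i)>z_n(j)$, or $z_n(i)=z_n(j)$ and $i<j$. Words $u,v$ of length $k$ are order-isomorphic if $u(i)>u(j)\iff v(i)>v(j)$ for all $i,j\in[k]$. *)

From mathcomp Require Import all_boot all_fingroup.
Set Implicit Arguments. Unset Strict Implicit. Unset Printing Implicit Defensive.

Definition zrun (n k : nat) : seq nat :=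
  if odd k then [seq i <- iota 1 n | odd i]
  else rev [seq i <- iota 1 n | ~~ odd i].

Definition zword (n : nat) : seq nat := flatten [seq zrun n k | k <- iota 1 n].

Definition is_zeta (n : nat) (zeta : {perm 'I_(size (zword n))}) : Prop :=
  forall i j : 'I_(size (zword n)), i != j ->
    ((zeta j < zeta i)%N <->
     ((nth 0 (zword n) j < nth 0 (zword n) i)%N \/
      (nth 0 (zword n) i = nth 0 (zword n) j /\ (i < j)%N))).

Definition contains_pattern (N k : nat) (sigma : {perm 'I_N}) (pi : {perm 'I_k}) : Prop :=
  exists f : 'I_k -> 'I_N,
    (forall a b : 'I_k, (a < b)%N -> (f a < f b)%N) /\
    (forall a b : 'I_k, (sigma (f a) < sigma (f b))%N <-> (pi a < pi b)%N).

From mathcomp Require Import all_boot all_fingroup zify.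
Set Implicit Arguments. Unset Strict Implicit. Unset Printing Implicit Defensive.

(* Reading a word over [1..n] greedily into z_n, each letter costs 0, 1 or 2
   new runs, so a word whose total cost is at most n is a subsequence of z_n.
   Encode pi by the word whose a-th letter is c plus the merge rank of pi(a):
   consecutive values share a letter only when the tie rule of zeta orders them
   correctly, so every occurrence of this word in z_n is an occurrence of pi.
   Shifting all letters by one exchanges their parities, hence the costs for the
   shifts c = 1 and c = 2 add up to 2n + 1 and one of them is at most n.  The
   shift 2 fits into [1..n] unless no two values are merged; in that case pi is
   layered and the shift 1 is checked directly. *)


Lemma sorted_split_at (T : eqType) (R : rel T) (s : seq T) y :
  irreflexive R -> transitive R -> (forall a b, a != b -> R a b || R b a) ->
  sorted R s -> y \in s -> s = [seq i <- s | R i y] ++ y :: [seq i <- s | R y i].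
Proof.
move=> irr tr tot; elim: s => // a s IH /= ps.
have pa := order_path_min tr ps.
rewrite in_cons; case: eqP => [-> _ | /eqP nay /= ys].
  have -> : [seq i <- s | R i a] = [::].
    apply/eqP; rewrite -size_eq0 size_filter -leqn0 leqNgt -has_count.
    apply/hasP => -[i iS Ria]; move/allP: pa => /(_ i iS) Rai.
    by move: (tr _ _ _ Rai Ria); rewrite irr.
  by rewrite /= irr /=; congr (_ :: _); apply/esym/all_filterP.
have Ray : R a y by move/allP: pa => /(_ y ys).
have Rya : R y a = false.
  by apply/negP => Rya; move: (tr _ _ _ Ray Rya); rewrite irr.
by rewrite Ray Rya /=; congr (_ :: _); apply: IH => //; exact: path_sorted ps.
Qed.

Definition run_rel (k : nat) : rel nat := fun a b => if odd k then a < b else b < a.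

Lemma run_rel_irr k : irreflexive (run_rel k).
Proof. by rewrite /run_rel => a; case: (odd k); rewrite ltnn. Qed.

Lemma run_rel_trans k : transitive (run_rel k).
Proof. by rewrite /run_rel => a b c; case: (odd k) => ? ?; lia. Qed.

Lemma run_rel_total k a b : a != b -> run_rel k a b || run_rel k b a.
Proof. by rewrite /run_rel; case: (odd k) => ?; lia. Qed.

Lemma zrun_sorted n k : sorted (run_rel k) (zrun n k).
Proof.
rewrite /zrun /run_rel; case: (odd k); last rewrite rev_sorted.
all: by apply: sorted_filter; [exact: ltn_trans | exact: iota_ltn_sorted].
Qed.

Lemma mem_zrun n k y : (y \in zrun n k) = [&& 0 < y, y <= n & odd y == odd k].
Proof.
rewrite /zrun; case: (odd k); rewrite ?mem_rev mem_filter mem_iota;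
  case: (odd y); rewrite /= ?andbT ?andbF //; lia.
Qed.

Definition zrun_after n k x := [seq y <- zrun n k | run_rel k x y].

Lemma zrun_split_at n k y :
  y \in zrun n k -> zrun n k = [seq i <- zrun n k | run_rel k i y] ++ y :: zrun_after n k y.
Proof.
apply: sorted_split_at;
  [exact: run_rel_irr | exact: run_rel_trans | exact: run_rel_total | exact: zrun_sorted].
Qed.

Lemma zrun_after_split n k x y : run_rel k x y -> y \in zrun n k ->
  zrun_after n k x = [seq i <- zrun_after n k x | run_rel k i y] ++ y :: zrun_after n k y.
Proof.
move=> xy yin.
have -> : zrun_after n k y = [seq i <- zrun_after n k x | run_rel k y i].
  rewrite /zrun_after -filter_predI; apply: eq_filter => i /=.
  by case e: (run_rel k y i) => //=; rewrite (run_rel_trans xy e).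
apply: sorted_split_at; [exact: run_rel_irr | exact: run_rel_trans | exact: run_rel_total | |].
  by apply: sorted_filter; [exact: run_rel_trans | exact: zrun_sorted].
by rewrite mem_filter xy.
Qed.

Definition zruns_from n j := flatten [seq zrun n i | i <- iota j (n.+1 - j)].

Lemma zword_runs_from n : zword n = zruns_from n 1.
Proof. by rewrite /zword /zruns_from subn1. Qed.

Lemma zruns_fromS n j : j <= n -> zruns_from n j = zrun n j ++ zruns_from n j.+1.
Proof. by move=> h; rewrite /zruns_from subSn // subSS. Qed.

Definition zrest n k x := zrun_after n k x ++ zruns_from n k.+1.

(* The pair (0, 0) stands for the empty position before [r_1], with 0 treated
   as a letter of an even run. *)
Definition zpos n k x := (k == 0) && (x == 0) || (0 < k) && (x \in zrun n k).

Lemma zpos_odd n k x : zpos n k x -> odd x = odd k.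
Proof.
case/orP => [/andP[/eqP-> /eqP->] | /andP[_]] //.
by rewrite mem_zrun => /and3P[_ _ /eqP].
Qed.

(* Number of runs entered when reading [y] greedily after the letter [x]. *)
Definition step_cost (x y : nat) : nat :=
  if odd x == odd y then (if (if odd x then x < y else y < x) then 0 else 2) else 1.

Lemma odd_step_cost x y k : odd x = odd k -> odd (k + step_cost x y) = odd y.
Proof. by rewrite /step_cost => h; case: eqP => e; first case: ifP => _; lia. Qed.

Lemma zrest_step n k x y : zpos n k x -> 0 < y <= n -> k + step_cost x y <= n ->
  zpos n (k + step_cost x y) y /\
  exists pre, zrest n k x = pre ++ y :: zrest n (k + step_cost x y) y.
Proof.
move=> xpos /andP[y0 yn] kn; have px := zpos_odd xpos.
have yin : y \in zrun n (k + step_cost x y).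
  by rewrite mem_zrun y0 yn (odd_step_cost y px) eqxx.
have kpos : 0 < k + step_cost x y.
  case/orP: xpos => [/andP[/eqP-> /eqP->] | /andP[k0 _]]; last by rewrite ltn_addr.
  by rewrite /step_cost /=; case: ifP => _ //; case: ifP.
split; first by rewrite /zpos kpos yin orbT.
move: kn yin; rewrite /step_cost; case: eqP => [e|_]; first case: ifP => [xy|_].
- rewrite addn0 => kn yin.
  have Rxy : run_rel k x y by rewrite /run_rel -px.
  have k0 : 0 < k by move: kpos; rewrite /step_cost xy e eqxx addn0.
  have xin : x \in zrun n k.
    by case/orP: xpos => /andP[] // /eqP k00; move: k0; rewrite k00.
  exists [seq i <- zrun_after n k x | run_rel k i y].
  by rewrite /zrest {1}(zrun_after_split Rxy yin) -catA.
- rewrite addn2 => kn yin.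
  rewrite /zrest (zruns_fromS (j := k.+1)); last lia.
  rewrite (zruns_fromS (j := k.+2)) // (zrun_split_at yin).
  exists (zrun_after n k x ++ zrun n k.+1 ++ [seq i <- zrun n k.+2 | run_rel k.+2 i y]).
  by rewrite -!catA.
- rewrite addn1 => kn yin.
  rewrite /zrest (zruns_fromS kn) (zrun_split_at yin).
  by exists (zrun_after n k x ++ [seq i <- zrun n k.+1 | run_rel k.+1 i y]); rewrite -!catA.
Qed.

Fixpoint path_cost (x : nat) (s : seq nat) : nat :=
  if s is y :: s' then step_cost x y + path_cost y s' else 0.

Lemma subseq_zrest n s : forall k x, zpos n k x -> all (fun y => 0 < y <= n) s ->
  k + path_cost x s <= n -> subseq s (zrest n k x).
Proof.
elim: s => [|y s IH] k x xpos /=; first by rewrite sub0seq.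
move=> /andP[yb sb]; rewrite addnA => ks.
have [ypos [pre ->]] := zrest_step xpos yb (leq_trans (leq_addr _ _) ks).
rewrite -[y :: s]cat0s; apply: cat_subseq; first exact: sub0seq.
by rewrite /= eqxx; exact: IH.
Qed.

Lemma subseq_zword n s : all (fun y => 0 < y <= n) s -> path_cost 0 s <= n ->
  subseq s (zword n).
Proof.
move=> sb cs; have := subseq_zrest (isT : zpos n 0 0) sb cs.
suff -> : zrest n 0 0 = zword n by [].
by rewrite /zrest /zrun_after (@eq_filter _ _ pred0) // filter_pred0 zword_runs_from.
Qed.

Lemma count_odd_iota j : count odd (iota 1 j) = uphalf j.
Proof. by elim: j => // j IH; rewrite -[j.+1]addn1 iotaD count_cat IH /=; lia. Qed.

Lemma count_even_iota j : count (fun i => ~~ odd i) (iota 1 j) = j./2.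
Proof. by elim: j => // j IH; rewrite -[j.+1]addn1 iotaD count_cat IH /=; lia. Qed.

Lemma size_zrun n k : size (zrun n k) = if odd k then uphalf n else n./2.
Proof.
by rewrite /zrun; case: (odd k); rewrite ?size_rev size_filter ?count_odd_iota ?count_even_iota.
Qed.

Lemma sumn_alternate A B j :
  sumn [seq if odd k then A else B | k <- iota 1 j] = uphalf j * A + j./2 * B.
Proof.
elim: j => // j IH; rewrite -[j.+1]addn1 iotaD map_cat sumn_cat IH /= addn0 addn1 /=.
rewrite uphalf_half; case: (odd j) => /=; rewrite ?add0n ?add1n !mulSn; lia.
Qed.

Lemma size_zwordE n : size (zword n) = uphalf n ^ 2 + n./2 ^ 2.
Proof.
rewrite /zword size_flatten /shape -map_comp.
by rewrite (eq_map (g := fun k => if odd k then uphalf n else n./2)) ?sumn_alternate //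
  => k /=; rewrite size_zrun.
Qed.

Lemma size_zword n : odd n -> size (zword n) = (n ^ 2 + 1) %/ 2.
Proof.
move=> on; rewrite size_zwordE.
have [m ->] : exists m, n = m.*2.+1 by exists n./2; rewrite -[LHS]odd_double_half on.
rewrite /= uphalf_double doubleK.
rewrite (_ : _ ^ 2 + 1 = (m.+1 ^ 2 + m ^ 2) * 2) ?mulnK // -mul2n !expnS !expn0 !muln1; nia.
Qed.

Lemma subseq_index (T : eqType) (x0 : T) (w s : seq T) : subseq w s ->
  exists f : nat -> nat,
    {in [pred i | i < size w] &, {homo f : i j / i < j}} /\
    forall i, i < size w -> f i < size s /\ nth x0 s (f i) = nth x0 w i.
Proof.
elim: s w => [|x s IH] [|y w] //=; try by exists id.
case: eqP => [<- | _] /IH[f [f_homo f_nth]].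
  exists (fun i => if i is i'.+1 then (f i').+1 else 0); split.
    by case=> [|i] [|j] //= ilt jlt; rewrite !ltnS => /f_homo; apply.
  by case=> [|i] //= /f_nth[].
exists (fun i => (f i).+1); split; first by move=> i j ilt jlt /f_homo; apply.
by move=> i /f_nth[].
Qed.

Lemma contains_pattern_of_subseq n k (zeta : {perm 'I_(size (zword n))})
    (pi : {perm 'I_k}) (w : nat -> nat) :
  is_zeta zeta -> subseq [seq w a | a <- iota 0 k] (zword n) ->
  (forall a b : 'I_k, a != b -> pi a < pi b <-> w a < w b \/ w a = w b /\ b < a) ->
  contains_pattern zeta pi.
Proof.
move=> zetaP /(subseq_index 0)[f []]; rewrite size_map size_iota => f_homo f_nth piP.
have f_mono := leq_mono_in f_homo; have f_lt := leqW_mono_in f_mono.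
have f_inj := incn_inj_in f_mono.
have fP (a : 'I_k) : f a < size (zword n) by have [] := f_nth a (ltn_ord a).
have wP (a : 'I_k) : nth 0 (zword n) (f a) = w a.
  by have [_ ->] := f_nth a (ltn_ord a); rewrite (nth_map 0) ?size_iota // nth_iota.
exists (fun a => Ordinal (fP a)); split=> [a b ab|a b]; first by apply: f_homo; rewrite ?inE.
have [-> | ab] := eqVneq a b; first by rewrite !ltnn.
have ne : Ordinal (fP b) != Ordinal (fP a).
  apply: contraNneq ab => /(congr1 val) /= fba.
  by apply/eqP/val_inj; apply: (f_inj _ _ _ _ (esym fba)); rewrite inE.
rewrite (zetaP _ _ ne) /= !wP f_lt ?inE // (piP _ _ ab).
by split=> -[|[/esym]]; auto.
Qed.

Fixpoint prefix_cost (w : nat -> nat) (a : nat) : nat :=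
  if a is a'.+1 then prefix_cost w a' + step_cost (w a') (w a) else step_cost 0 (w 0).

Lemma prefix_cost_path w j m :
  prefix_cost w j + path_cost (w j) [seq w i | i <- iota j.+1 m] = prefix_cost w (j + m).
Proof.
elim: m j => [|m IH] j /=; first by rewrite !addn0.
by rewrite addnA -[_ + step_cost _ _]/(prefix_cost w j.+1) IH addnS.
Qed.

Lemma path_cost_prefix w a : path_cost 0 [seq w i | i <- iota 0 a.+1] = prefix_cost w a.
Proof. by rewrite -[RHS]add0n -(prefix_cost_path w 0 a). Qed.

Lemma odd_prefix_cost w a : odd (prefix_cost w a) = odd (w a).
Proof. by elim: a => [|a IH] /=; [exact: (odd_step_cost _ (k := 0)) | exact: odd_step_cost]. Qed.

Lemma eq_prefix_cost w w' a : (forall i, i <= a -> w i = w' i) ->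
  prefix_cost w a = prefix_cost w' a.
Proof.
elim: a => [|a IH] eq_w /=; first by rewrite eq_w.
by rewrite IH ?eq_w // => i ia; apply/eq_w/ltnW.
Qed.

Lemma step_costS x y : x != y -> step_cost x y + step_cost x.+1 y.+1 = 2.
Proof.
by rewrite /step_cost /= !ltnS => ne; case: (odd x) (odd y) => [] [] /=; case: ltngtP ne.
Qed.

(* Shifting every letter by one flips all parities, so the two costs are complementary. *)
Lemma prefix_cost_shift w a : (forall i, i < a -> w i != w i.+1) ->
  prefix_cost w a + prefix_cost (fun i => (w i).+1) a = a.*2 + 3.
Proof.
elim: a => [|a IH] w_neq /=.
  by rewrite /step_cost /=; case: (odd (w 0)) => /=; case: (w 0) => [|[]].
have := step_costS (w_neq a (ltnSn a)).
have := IH (fun i ia => w_neq i (ltnW ia)); lia.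
Qed.

Lemma step_cost_lt x y : x < y ->
  step_cost x y = if odd x == odd y then (if odd x then 0 else 2) else 1.
Proof. by move=> xy; rewrite /step_cost xy; case: (odd x) => //; rewrite ltnNge ltnW. Qed.

Lemma step_cost_par x y : odd x != odd y -> step_cost x y = 1.
Proof. by rewrite /step_cost => /negbTE ->. Qed.

(* Letter of the value [r] of a permutation with inverse [Q]: consecutive values
   share a letter exactly when the larger one occurs at least two positions
   before the smaller one, so that the tie rule of [zeta] orders them correctly
   and adjacent letters of the resulting word always differ. *)
Fixpoint merge_rank (Q : nat -> nat) (r : nat) : nat :=
  if r is r'.+1 then merge_rank Q r' + (Q r' <= (Q r'.+1).+1) else 0.

Lemma merge_rank_le Q r : merge_rank Q r <= r.
Proof. by elim: r => //= r IH; case: (Q r <= _) => /=; lia. Qed.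

Lemma merge_rank_mono Q : {homo merge_rank Q : r r' / r <= r'}.
Proof.
move=> r r'; elim: r' => [|r' IH]; first by rewrite leqn0 => /eqP ->.
rewrite leq_eqVlt => /orP[/eqP -> //| /IH le_r]; exact: leq_trans le_r (leq_addr _ _).
Qed.

Lemma merge_rank_tie Q r r' : r < r' -> merge_rank Q r = merge_rank Q r' -> Q r' + 2 <= Q r.
Proof.
elim: r' => // r' IH; rewrite ltnS leq_eqVlt => /orP[/eqP <- | lt] /=.
  by case: leqP => h /=; lia.
have m1 := merge_rank_mono Q (ltnW lt); have m2 := merge_rank_mono Q (leqnSn r').
move: m2 => /= m2 e.
have e' : merge_rank Q r = merge_rank Q r' by move: e; case: (Q r' <= _) => /=; lia.
by have := IH lt e'; move: e; case: leqP => /= h; lia.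
Qed.

Lemma merge_rank_full Q r :
  (merge_rank Q r == r) = all (fun i => Q i <= (Q i.+1).+1) (iota 0 r).
Proof.
elim: r => // r IH; rewrite -[in RHS]addn1 iotaD all_cat /= andbT -IH.
by have := merge_rank_le Q r; case: (Q r <= _); case: eqP; case: eqP => //=; lia.
Qed.

Lemma merge_rank_full_le Q r i : merge_rank Q r = r -> i <= r -> merge_rank Q i = i.
Proof.
move=> /eqP; rewrite merge_rank_full => /allP full ir; apply/eqP; rewrite merge_rank_full.
by apply/allP => j; rewrite !mem_iota /= => ji; apply: full; rewrite mem_iota; lia.
Qed.

Lemma uniq_map_iota (P Q : nat -> nat) a : (forall x, x <= a -> Q (P x) = x) ->
  uniq [seq P b | b <- iota 0 a.+1].
Proof.
move=> PK; rewrite map_inj_in_uniq ?iota_uniq // => x y; rewrite !mem_iota !ltnS => xa ya e.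
by rewrite -(PK x xa) -(PK y ya) e.
Qed.

Lemma prefix_onto (P Q : nat -> nat) a : (forall x, x <= a -> Q (P x) = x) ->
  (forall b, b <= a -> P b <= a) -> forall r, r <= a -> exists2 b, b <= a & P b = r.
Proof.
move=> PK P_le r ra.
have sub : {subset [seq P b | b <- iota 0 a.+1] <= iota 0 a.+1}.
  by move=> x /mapP[b]; rewrite !mem_iota !ltnS => ba ->; rewrite P_le.
have [|_ /(_ r)] := uniq_min_size (uniq_map_iota PK) sub; first by rewrite size_map.
rewrite mem_iota ltnS ra => /mapP[b]; rewrite mem_iota ltnS => ba ->; exists b => //.
Qed.

Lemma leq_bigmax_inj (P Q : nat -> nat) a : (forall x, x <= a -> Q (P x) = x) ->
  a <= \max_(0 <= b < a.+1) P b.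
Proof.
move=> PK.
have sub : {subset [seq P b | b <- iota 0 a.+1] <= iota 0 (\max_(0 <= b < a.+1) P b).+1}.
  move=> x /mapP[b]; rewrite !mem_iota ltnS => ba ->.
  by rewrite ltnS (leq_bigmax_seq (P := predT)) // mem_index_iota.
by have := uniq_leq_size (uniq_map_iota PK) sub; rewrite size_map !size_iota.
Qed.

Section Permutation.

Variables (m : nat) (P Q : nat -> nat).
Hypothesis P_le : forall x, x <= m -> P x <= m.
Hypotheses (PK : forall x, x <= m -> Q (P x) = x) (QK : forall x, x <= m -> P (Q x) = x).

Lemma merge_rank_order c a b : a <= m -> b <= m -> a != b ->
  P a < P b <-> merge_rank Q (P a) + c < merge_rank Q (P b) + c \/
                merge_rank Q (P a) + c = merge_rank Q (P b) + c /\ b < a.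
Proof.
move=> am bm ab; have qa := PK am; have qb := PK bm.
rewrite ltn_add2r; split.
  move=> lt; have := merge_rank_mono Q (ltnW lt); rewrite leq_eqVlt => /orP[/eqP e|]; last by left.
  by right; split; [rewrite e | have := merge_rank_tie lt e; rewrite qa qb; lia].
case: (ltngtP (P a) (P b)) => // [gt|eq].
  have := merge_rank_mono Q (ltnW gt); rewrite leq_eqVlt => /orP[/eqP e|lt'].
    by have := merge_rank_tie gt e; rewrite qa qb => h [|[_ ba]]; lia.
  lia.
by move: (congr1 Q eq); rewrite qa qb => /eqP; rewrite (negbTE ab).
Qed.

Lemma merge_rank_adj_neq a : a < m -> merge_rank Q (P a) != merge_rank Q (P a.+1).
Proof.
move=> am; have qa := PK (ltnW am); have qb := PK am.
apply/eqP => e; case: (ltngtP (P a) (P a.+1)) => [lt|gt|eq].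
- by have := merge_rank_tie lt e; rewrite qa qb; lia.
- by have := merge_rank_tie gt (esym e); rewrite qa qb; lia.
- by move: (congr1 Q eq); rewrite qa qb; lia.
Qed.

(* The case where [merge_rank Q] is the identity, i.e. [P] is a layered
   permutation; there the letters are [P a + 1] and the shift 2 is unavailable. *)
Section Layered.

Hypothesis Q_layered : forall i, i < m -> Q i <= (Q i.+1).+1.

Lemma down_crossing c i j : i < j <= m -> c < Q i -> Q j <= c ->
  exists k, [/\ i <= k, k < j, Q k = c.+1 & Q k.+1 = c].
Proof.
elim: j => // j IH /andP[ij jm] ci cj.
have [cj'|jc] := ltnP c (Q j).
  by exists j; have := Q_layered jm; split => //; lia.
have ij' : i < j by move: ij; rewrite ltnS leq_eqVlt => /orP[/eqP e|//]; move: ci jc; rewrite e; lia.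
have [k [ik kj ? ?]] := IH (introT andP (conj ij' (ltnW jm))) ci jc.
by exists k; split => //; apply: ltnW.
Qed.

Lemma down_crossing_values c i j : i < j <= m -> c < Q i -> Q j <= c ->
  [/\ i <= P c.+1, P c.+1 < j & P c = (P c.+1).+1].
Proof.
move=> /andP[ij jm] ci cj.
have [k [ik kj Qk Qk1]] := down_crossing (introT andP (conj ij jm)) ci cj.
have Pc1 : P c.+1 = k by rewrite -Qk QK //; lia.
by rewrite Pc1 -Qk1 QK //; lia.
Qed.

Lemma layered_descent a : a < m -> P a.+1 < P a -> P a = (P a.+1).+1.
Proof.
move=> am lt; have lt_m : P a.+1 < P a <= m by rewrite lt P_le // ltnW.
by have [] // := down_crossing_values lt_m (eq_leq (esym (PK am))) (eq_leq (PK (ltnW am))).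
Qed.

Lemma layered_ascent a : a < m -> P a < P a.+1 -> forall b, b <= a -> P b <= a.
Proof.
move=> am lt b ba; rewrite leqNgt; apply/negP => ab.
have bm : b <= m by apply: leq_trans ba (ltnW am).
have [/allP Q_prefix | /allPn[u]] := boolP (all (fun u => Q u <= a) (iota 0 a.+1)).
  have Q_prefix' b' : b' <= a -> Q b' <= a by move=> ?; apply: Q_prefix; rewrite mem_iota.
  have [u ua Qu] := prefix_onto (fun x xa => QK (leq_trans xa (ltnW am))) Q_prefix' ba.
  by move: ab; rewrite -Qu QK ?ltnNge ?ua // (leq_trans ua (ltnW am)).
rewrite mem_iota /= ltnS -ltnNge => ua au.
have uPb : u < P b <= m by rewrite (leq_ltn_trans ua ab) P_le.
have QPb : Q (P b) <= a by rewrite PK.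
have [_ _ e] := down_crossing_values uPb au QPb.
by move: lt; rewrite e ltnNge leqnSn.
Qed.

Lemma layered_ascent_max a : a < m -> P a < P a.+1 ->
  \max_(0 <= b < a.+1) P b = a /\ a < P a.+1.
Proof.
move=> am lt; have P_prefix := layered_ascent am lt.
have PKa x : x <= a -> Q (P x) = x by move=> xa; apply/PK/(leq_trans xa (ltnW am)).
split.
  apply/eqP; rewrite eqn_leq (leq_bigmax_inj PKa) andbT.
  by apply/bigmax_leqP_seq => b; rewrite mem_index_iota ltnS => ba _; apply: P_prefix.
rewrite ltnNge; apply/negP => Pa1.
have [b ba /(congr1 Q)] := prefix_onto PKa P_prefix Pa1.
by rewrite PKa // PK // => eq_b; move: ba; rewrite eq_b ltnn.
Qed.

(* In the layered case descents of [P] are by exactly one and cost one run, while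
   an ascent at [a] starts a new block above [a], so the cost never exceeds the
   position by more than the parity of the largest value seen so far. *)
Lemma layered_prefix_cost a : a <= m ->
  prefix_cost (fun x => P x + 1) a <= a + 1 + odd (\max_(0 <= b < a.+1) P b).
Proof.
elim: a => [|a IH] am.
  by rewrite big_nat1 /= /step_cost /= addn1 /=; case: (odd (P 0)).
have {}IH := IH (ltnW am); have par := odd_prefix_cost (fun x => P x + 1) a.
rewrite big_nat_recr //=; rewrite /= in par.
case: (ltngtP (P a) (P a.+1)) => [lt|gt|eq].
- have [Ma Pa1] := layered_ascent_max am lt.
  rewrite Ma in IH *; rewrite (maxn_idPr (ltnW Pa1)) step_cost_lt ?ltn_add2r //.
  rewrite !addn1 /= in par *.
  by case: (boolP (odd (P a))); case: (boolP (odd (P a.+1))) => /=; lia.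
- have Pa := layered_descent am gt.
  have -> : maxn (\max_(0 <= b < a.+1) P b) (P a.+1) = \max_(0 <= b < a.+1) P b.
    apply/maxn_idPl; apply: leq_trans (ltnW gt) _.
    by rewrite (leq_bigmax_seq (P := predT)) // mem_index_iota ltnSn.
  rewrite step_cost_par; first lia.
  by rewrite Pa !addn1 /= negbK; case: (odd (P a.+1)).
- by have := congr1 Q eq; rewrite !PK ?(ltnW am) // => /n_Sn.
Qed.

Lemma layered_cost : ~~ odd m -> prefix_cost (fun x => P x + 1) m <= m.+1.
Proof.
move=> om; have := layered_prefix_cost (leqnn m).
have -> : \max_(0 <= b < m.+1) P b = m.
  apply/eqP; rewrite eqn_leq (leq_bigmax_inj PK) andbT.
  by apply/bigmax_leqP_seq => b; rewrite mem_index_iota ltnS => bm _; apply: P_le.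
by rewrite (negbTE om) addn0 addn1.
Qed.

End Layered.

Lemma embeddable_shift : ~~ odd m -> exists c, [/\ 0 < c,
  forall a, a <= m -> merge_rank Q (P a) + c <= m.+1 &
  prefix_cost (fun a => merge_rank Q (P a) + c) m <= m.+1].
Proof.
move=> even_m; pose w c a := merge_rank Q (P a) + c.
have adj i : i < m -> w 1 i != w 1 i.+1 by move=> im; rewrite eqn_add2r merge_rank_adj_neq.
have w2 : prefix_cost (fun i => (w 1 i).+1) m = prefix_cost (w 2) m.
  by apply: eq_prefix_cost => i _; rewrite /w addn1 addn2.
have := prefix_cost_shift adj; rewrite w2 => cost_sum.
have [cost1 | cost1] := leqP (prefix_cost (w 1) m) m.+1.
  exists 1; split=> // a am; rewrite addn1 ltnS.
  exact: leq_trans (merge_rank_le Q _) (P_le am).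
have not_full : merge_rank Q m < m.
  rewrite ltn_neqAle merge_rank_le andbT; apply/negP => /[dup] /eqP full.
  rewrite merge_rank_full => /allP layered; move: cost1; rewrite ltnNge => /negP; apply.
  rewrite (@eq_prefix_cost _ (fun x => P x + 1)) => [|i im].
    by apply: layered_cost even_m => i im; apply: layered; rewrite mem_iota.
  by rewrite /w (merge_rank_full_le full) ?P_le.
exists 2; split=> // [a am|]; last by move: cost1 cost_sum; rewrite /w; lia.
by have := merge_rank_mono Q (P_le am); rewrite /w; lia.
Qed.

End Permutation.

Theorem mainTheorem6 (n : nat) (hodd : odd n) :
  size (zword n) = (n ^ 2 + 1) %/ 2 /\
  forall zeta : {perm 'I_(size (zword n))}, is_zeta zeta ->
    forall pi : {perm 'I_n}, contains_pattern zeta pi.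
Proof.
split; first exact: size_zword.
case: n hodd => [//|m] even_m zeta zetaP pi.
pose P x := nat_of_ord (pi (inord x)).
pose Q x := nat_of_ord ((pi^-1)%g (inord x)).
have P_le x : x <= m -> P x <= m by move=> _; rewrite -ltnS ltn_ord.
have PK x : x <= m -> Q (P x) = x by move=> xm; rewrite /Q /P inord_val permK inordK.
have QK x : x <= m -> P (Q x) = x by move=> xm; rewrite /Q /P inord_val permKV inordK.
have [c [c_gt0 w_le w_cost]] := embeddable_shift P_le PK QK (even_m : ~~ odd m).
apply: (contains_pattern_of_subseq (w := fun a => merge_rank Q (P a) + c) zetaP).
  apply: subseq_zword; last by rewrite path_cost_prefix.
  apply/allP => y /mapP[a]; rewrite mem_iota add0n ltnS => /andP[_ am] ->.
  by rewrite addn_gt0 c_gt0 orbT w_le.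
move=> a b ab; have Pv (x : 'I_m.+1) : P x = pi x by rewrite /P inord_val.
by rewrite -(Pv a) -(Pv b); exact: (merge_rank_order PK c (ltn_ord a) (ltn_ord b) ab).
Qed.
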